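(* Let $G$ be an abelian group and let $A,B\subseteq G$ be finite, nonempty subsets with $H=\mathsf H(A+B)=\mathsf H(B)$. Then $|(A\cup \{x\})+B|\geq |(A\cup \{x\})+H|+|B+H|-|H|$ for any $x\in G$.
   Context: $\mathsf H(A)=\{g\in G:g+A=A\}$ denotes the stabilizer of $A$; $A+B=\{a+b:a\in A,b\in B\}$. *)

From HB Require Import structures.
From mathcomp Require Import all_boot all_algebra.
From mathcomp Require Import finmap.
Set Implicit Arguments. Unset Strict Implicit. Unset Printing Implicit Defensive.
Import GRing.Theory.
Local Open Scope ring_scope.
Local Open Scope fset_scope.

Definition sumset (G : zmodType) (A B : {fset G}) : {fset G} :=
  [fset (a + b)%R | a in A, b in B].

Definition translate (G : zmodType) (g : G) (C : {fset G}) : {fset G} :=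
  [fset (g + c)%R | c in C].

Definition is_stabilizer (G : zmodType) (C H : {fset G}) : Prop :=
  forall g : G, g \in H <-> translate g C = C.

From mathcomp Require Import all_boot all_algebra.
From mathcomp Require Import finmap.
From mathcomp Require Import zify.
Set Implicit Arguments. Unset Strict Implicit. Unset Printing Implicit Defensive.
Import GRing.Theory.
Local Open Scope fset_scope.
Local Open Scope ring_scope.

(* The lemma is a consequence of Kneser's theorem |A + H| + |B + H| <= |A + B| + |H|,
   H the stabilizer of A + B: if x adds nothing to A + B, apply Kneser to (A u {x}, B);
   otherwise (A u {x}) + B, which is H-periodic because B is, gains a whole coset of H
   while (A u {x}) + H gains at most one.

   Kneser's theorem follows from its weak form |A| + |B| <= |A + B| + |H| applied to
   A + H and B + H.  Let (A, B), |B| <= |A|, be a counterexample to the weak form that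
   is minimal for the order "smaller |A + B|, then larger |A| + |B|, then smaller
   min(|A|, |B|)".  Minimality makes A and B saturated: nothing can be added to either
   without enlarging A + B.  If every translate of B meeting A lies inside A, then B
   lies in a coset of H; otherwise translate B so that it meets A, is not contained in
   A, and |A n B| is maximal.  Then C = (A u B) + (A n B) is a proper subset of A + B,
   its stabilizer K fixes A n B, and Kneser for (A u B, A n B) shows that every a + b
   outside C has more than |H| elements of B in a + K.  But these all lie in one coset
   of the stabilizer of P = {k in K | k + B <= A}, which is contained in H. *)

Lemma fset_arg_max (T : choiceType) (D : {fset T}) (f : T -> nat) :
  D != fset0 -> exists2 g, g \in D & forall h, h \in D -> (f h <= f g)%N.
Proof.
case/fset0Pn => g0 g0D.
have [g _ gmax] := @arg_maxnP D [` g0D] xpredT (fun h => f (val h)) isT.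
by exists (val g) => [|h hD]; [exact: valP | exact: (gmax [` hD])].
Qed.

Section Sumset.
Variable G : zmodType.
Implicit Types (A B C X Y : {fset G}) (a b c g h x : G).

Lemma sumsetP A B x :
  reflect (exists2 a, a \in A & exists2 b, b \in B & x = a + b) (x \in sumset A B).
Proof. exact: imfset2P. Qed.

Lemma mem_sumset A B a b : a \in A -> b \in B -> a + b \in sumset A B.
Proof. by move=> aA bB; apply/sumsetP; exists a => //; exists b. Qed.

Lemma translateP g C x : (x \in translate g C) = (x - g \in C).
Proof.
apply/imfsetP/idP => [[c cC ->]|xC]; first by rewrite addrC addKr.
by exists (x - g) => //; rewrite addrC subrK.
Qed.

Lemma mem_translate g C c : c \in C -> g + c \in translate g C.
Proof. by rewrite translateP addrC addKr. Qed.

Lemma card_translate g C : #|` translate g C| = #|` C|.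
Proof. by rewrite card_imfset //; apply: addrI. Qed.

Lemma translate_eq0 g C : (translate g C == fset0) = (C == fset0).
Proof. by rewrite -!cardfs_eq0 card_translate. Qed.

Lemma translateD g h C : translate g (translate h C) = translate (g + h) C.
Proof. by apply/fsetP=> x; rewrite !translateP opprD addrA. Qed.

Lemma sumsetC A B : sumset A B = sumset B A.
Proof.
by apply/fsetP=> x; apply/sumsetP/sumsetP=> -[a aA [b bB ->]];
  exists b => //; exists a; rewrite // addrC.
Qed.

Lemma sumsetA A B C : sumset A (sumset B C) = sumset (sumset A B) C.
Proof.
apply/fsetP=> x; apply/sumsetP/sumsetP.
  case=> a aA [_ /sumsetP[b bB [c cC ->]] ->].
  by exists (a + b); [exact: mem_sumset | exists c; rewrite // addrA].
case=> _ /sumsetP[a aA [b bB ->]] [c cC ->].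
by exists a => //; exists (b + c); [exact: mem_sumset | rewrite addrA].
Qed.

Lemma sumsetS A A' B B' :
  A `<=` A' -> B `<=` B' -> sumset A B `<=` sumset A' B'.
Proof.
move=> /fsubsetP sA /fsubsetP sB; apply/fsubsetP=> _ /sumsetP[a aA [b bB ->]].
by apply: mem_sumset; [apply: sA | apply: sB].
Qed.

Lemma sumsetUl A A' B : sumset (A `|` A') B = sumset A B `|` sumset A' B.
Proof.
apply/fsetP=> x; rewrite in_fsetU; apply/sumsetP/orP.
  by case=> a; rewrite in_fsetU => /orP[] aA [b bB ->]; [left|right];
    exact: mem_sumset.
by case=> /sumsetP[a aA [b bB ->]]; exists a; rewrite ?in_fsetU ?aA ?orbT //;
  exists b.
Qed.

Lemma sumset1 g C : sumset [fset g] C = translate g C.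
Proof.
apply/fsetP=> x; rewrite translateP; apply/sumsetP/idP.
  by case=> _ /fset1P-> [c cC ->]; rewrite addrC addKr.
by move=> xC; exists g; rewrite ?fset11 //; exists (x - g); rewrite // addrC subrK.
Qed.

Lemma sumset_translate g A B : sumset A (translate g B) = translate g (sumset A B).
Proof. by rewrite -!sumset1 sumsetA [sumset A _]sumsetC sumsetA. Qed.

Lemma sumset_eq0 A B : (sumset A B == fset0) = (A == fset0) || (B == fset0).
Proof.
apply/idP/idP; last first.
  by case/orP=> /eqP->; apply/eqP/fsetP=> x; rewrite inE;
    apply/sumsetP=> -[a ? [b ? _]].
apply: contraLR; rewrite negb_or => /andP[/fset0Pn[a aA] /fset0Pn[b bB]].
by apply/fset0Pn; exists (a + b); exact: mem_sumset.
Qed.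

Lemma leq_card_sumsetl A B : B != fset0 -> (#|` A| <= #|` sumset A B|)%N.
Proof.
case/fset0Pn=> b bB; rewrite -(card_translate b) fsubset_leq_card //.
by rewrite -sumset1 sumsetC sumsetS ?fsub1set.
Qed.

Lemma leq_card_sumsetr A B : A != fset0 -> (#|` B| <= #|` sumset A B|)%N.
Proof. by rewrite sumsetC; exact: leq_card_sumsetl. Qed.

End Sumset.

Section Stabilizer.
Variable G : zmodType.
Implicit Types (A B C X Y : {fset G}) (a b c g h x : G).

(* Only the differences C - C can stabilize a nonempty C; note that stab fset0 = fset0. *)
Definition stab C : {fset G} :=
  [fset g in [fset c - c' | c in C, c' in C] | translate g C == C].

Lemma translate_stab C g : g \in stab C -> translate g C = C.
Proof. by rewrite !inE => /andP[_ /eqP]. Qed.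

Lemma stab_add C g c : g \in stab C -> c \in C -> g + c \in C.
Proof. by move=> /translate_stab CE cC; rewrite -CE mem_translate. Qed.

Lemma stabP C g : C != fset0 ->
  reflect (forall c, c \in C -> g + c \in C) (g \in stab C).
Proof.
move=> Cn; apply: (iffP idP) => [gK c|gC]; first exact: stab_add.
case/fset0Pn: (Cn) => c0 c0C.
rewrite !inE /= eqEfcard card_translate leqnn andbT; apply/andP; split.
  by apply/imfset2P; exists (g + c0); rewrite ?inE ?gC //; exists c0; rewrite ?addrK.
by apply/fsubsetP=> x; rewrite translateP => /gC; rewrite addrC subrK.
Qed.

Lemma is_stabilizerE C H : C != fset0 -> is_stabilizer C H -> H = stab C.
Proof.
move=> Cn stabH; apply/fsetP=> g; apply/idP/idP; last by move/translate_stab/stabH.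
by move/stabH=> gC; apply/stabP => // c cC; rewrite -gC mem_translate.
Qed.

Lemma stab_translate g C : stab (translate g C) = stab C.
Proof.
have [->|Cn] := eqVneq C fset0.
  by congr stab; apply/fsetP=> x; rewrite translateP !inE.
have gCn : translate g C != fset0 by rewrite translate_eq0.
apply/fsetP=> h; apply/stabP/stabP => // hC c.
  by move/(mem_translate g)/hC; rewrite translateP [g + c]addrC addrA addrK.
by rewrite !translateP -addrA; exact: hC.
Qed.

Section StabilizerSubgroup.
Variable C : {fset G}.
Hypothesis Cn : C != fset0.
Local Notation K := (stab C).

Lemma stab0 : 0 \in K.
Proof. by apply/stabP => // c; rewrite add0r. Qed.

Lemma stab_neq0 : K != fset0.
Proof. by apply/fset0Pn; exists 0; exact: stab0. Qed.

Lemma stabD g h : g \in K -> h \in K -> g + h \in K.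
Proof. by move=> gK hK; apply/stabP => // c cC; rewrite -addrA !stab_add. Qed.

Lemma stabN g : g \in K -> - g \in K.
Proof.
move=> gK; apply/stabP => // c cC.
by have := cC; rewrite -{1}(translate_stab gK) translateP addrC.
Qed.

Lemma stabB g h : g \in K -> h \in K -> g - h \in K.
Proof. by move=> gK hK; rewrite stabD ?stabN. Qed.

Lemma sumset_stab : sumset C K = C.
Proof.
apply/fsetP=> x; apply/sumsetP/idP => [[c cC [k kK ->]]|xC].
  by rewrite addrC stab_add.
by exists x => //; exists 0; rewrite ?addr0 ?stab0.
Qed.

Lemma sumset_stab_sub X : X `<=` sumset X K.
Proof. by apply/fsubsetP=> x xX; rewrite -[x]addr0 mem_sumset ?stab0. Qed.

Lemma sumset_stabK X : sumset (sumset X K) K = sumset X K.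
Proof.
apply/eqP; rewrite eqEfsubset sumset_stab_sub andbT -sumsetA.
apply: sumsetS => //; apply/fsubsetP=> _ /sumsetP[g gK [h hK ->]].
exact: stabD.
Qed.

Lemma sumset_stab_distr X Y : sumset (sumset X K) (sumset Y K) = sumset (sumset X Y) K.
Proof. by rewrite sumsetA -(sumsetA X) (sumsetC _ Y) sumsetA sumset_stabK. Qed.

End StabilizerSubgroup.

Lemma leq_card_add_stab S T : S != fset0 -> S `<=` T ->
  sumset T (stab S) `<=` T -> S != T -> (#|` S| + #|` stab S| <= #|` T|)%N.
Proof.
move=> Sn ST TK_T SneT.
have /fsubsetPn[y yT ySn] : ~~ (T `<=` S).
  by apply: contra SneT => TS; rewrite eqEfsubset ST.
have yK_sub : translate y (stab S) `<=` T `\` S.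
  apply/fsubsetP=> z; rewrite translateP => zyK; apply/fsetDP; split.
    by rewrite (fsubsetP TK_T) // -(subrK y z) addrC mem_sumset.
  apply: contra ySn => zS.
  by have := stab_add (stabN Sn zyK) zS; rewrite opprB subrK.
have := fsubset_leq_card yK_sub; rewrite card_translate cardfsDS //.
have := fsubset_leq_card ST; lia.
Qed.

End Stabilizer.

Section KneserInduction.
Variable G : zmodType.
Implicit Types (A B X Y : {fset G}).

Definition kneser_bound X Y :=
  (#|` X| + #|` Y| <= #|` sumset X Y| + #|` stab (sumset X Y)|)%N.

Definition kneser_lt X Y A B : Prop :=
  (#|` sumset X Y| < #|` sumset A B|)%N \/
  #|` sumset X Y| = #|` sumset A B| /\
  ((#|` A| + #|` B| < #|` X| + #|` Y|)%N \/
   (#|` X| + #|` Y| = #|` A| + #|` B|)%N /\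
   (minn #|` X| #|` Y| < minn #|` A| #|` B|)%N).

Lemma kneser_boundC A B : kneser_bound A B = kneser_bound B A.
Proof. by rewrite /kneser_bound sumsetC addnC. Qed.

Lemma kneser_ltC X Y A B : kneser_lt X Y B A <-> kneser_lt X Y A B.
Proof. by rewrite /kneser_lt (sumsetC B) (addnC #|` B|) (minnC #|` B|). Qed.

Lemma kneser_lt_translate g X Y A B :
  kneser_lt X Y A (translate g B) <-> kneser_lt X Y A B.
Proof. by rewrite /kneser_lt sumset_translate !card_translate. Qed.

(* The middle clause is well founded since |X| + |Y| <= 2 |X + Y| for nonempty X, Y. *)
Lemma kneser_lt_ind (P : {fset G} -> {fset G} -> Prop) :
  (forall A B, A != fset0 -> B != fset0 ->
    (forall X Y, X != fset0 -> Y != fset0 -> kneser_lt X Y A B -> P X Y) ->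
    P A B) ->
  forall A B, A != fset0 -> B != fset0 -> P A B.
Proof.
move=> step.
suff ind n d m A B : A != fset0 -> B != fset0 -> #|` sumset A B| = n ->
    ((#|` sumset A B|).*2 - (#|` A| + #|` B|) = d)%N ->
    minn #|` A| #|` B| = m -> P A B.
  by move=> A B An Bn; exact: ind.
elim/ltn_ind: n d m A B => n IHn; elim/ltn_ind=> d IHd; elim/ltn_ind=> m IHm.
move=> A B An Bn nE dE mE; subst n d m; apply: step => // X Y Xn Yn.
have := leq_card_sumsetl X Yn; have := leq_card_sumsetr Y Xn.
move=> leY leX [lt | [eqn [lt | [eqs lt]]]].
- exact: (IHn _ lt _ _ _ _ Xn Yn erefl erefl erefl).
- apply: (IHd _ _ _ _ _ Xn Yn eqn erefl erefl).
  by move: leX leY; rewrite eqn -!muln2; lia.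
- by apply: (IHm _ lt _ _ Xn Yn eqn _ erefl); rewrite eqn eqs.
Qed.

Lemma kneser_of_bound X Y : X != fset0 -> Y != fset0 ->
  kneser_bound (sumset X (stab (sumset X Y))) (sumset Y (stab (sumset X Y))) ->
  (#|` sumset X (stab (sumset X Y))| + #|` sumset Y (stab (sumset X Y))| <=
   #|` sumset X Y| + #|` stab (sumset X Y)|)%N.
Proof.
move=> Xn Yn; have XYn : sumset X Y != fset0 by rewrite sumset_eq0 negb_or Xn.
by rewrite /kneser_bound sumset_stab_distr // sumset_stab.
Qed.

End KneserInduction.

Section KneserStep.
Variables (G : zmodType) (A B : {fset G}).
Implicit Types (X Y : {fset G}) (a b g k y : G).

Local Notation S := (sumset A B).
Local Notation H := (stab (sumset A B)).
Local Notation U := (A `|` B).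
Local Notation I := (A `&` B).
Local Notation C := (sumset (A `|` B) (A `&` B)).
Local Notation K := (stab (sumset (A `|` B) (A `&` B))).
Local Notation P := [fset k in K | translate k B `<=` A].

Hypotheses (An : A != fset0) (Bn : B != fset0) (leBA : (#|` B| <= #|` A|)%N).
Hypothesis IH : forall X Y, X != fset0 -> Y != fset0 -> kneser_lt X Y A B ->
  kneser_bound X Y.
Hypothesis small_sumset : (#|` S| + #|` H| < #|` A| + #|` B|)%N.
Hypotheses (In : I != fset0) (BnsubA : ~~ (B `<=` A)).
Hypothesis max_overlap : forall g, A `&` translate g B != fset0 ->
  ~~ (translate g B `<=` A) -> (#|` A `&` translate g B| <= #|` I|)%N.

Lemma saturated X Y :
  A `<=` X -> B `<=` Y -> sumset X Y `<=` S -> X = A /\ Y = B.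
Proof.
move=> AX BY XYS.
have XYE : sumset X Y = S by apply/eqP; rewrite eqEfsubset XYS sumsetS.
have Xn : X != fset0 by apply: contraNneq An => X0; rewrite -fsubset0 -X0.
have Yn : Y != fset0 by apply: contraNneq Bn => Y0; rewrite -fsubset0 -Y0.
have cardXY : (#|` X| + #|` Y| <= #|` A| + #|` B|)%N.
  rewrite leqNgt; apply/negP => lt.
  by have := IH Xn Yn; rewrite /kneser_lt /kneser_bound XYE; lia.
have leAX := fsubset_leq_card AX; have leBY := fsubset_leq_card BY.
have [eqXA eqYB] : #|` X| = #|` A| /\ #|` Y| = #|` B| by lia.
by split; apply/eqP; rewrite eq_sym eqEfcard ?AX ?BY ?eqXA ?eqYB /=.
Qed.

Lemma C_neq0 : C != fset0.
Proof. by rewrite sumset_eq0 fsetU_eq0 (negbTE An) (negbTE In). Qed.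

Lemma C_sub_S : C `<=` S.
Proof.
rewrite sumsetUl fsubUset sumsetS ?fsubsetIr //=.
by rewrite (sumsetC B) sumsetS ?fsubsetIl.
Qed.

(* Otherwise (U, I) would be a smaller counterexample, as |I| < |B|. *)
Lemma C_neq_S : C != S.
Proof.
apply/eqP=> CS; have Un : U != fset0 by rewrite fsetU_eq0 (negbTE An).
have ltIB := fproper_ltn_card (fproperIr BnsubA).
have := cardfsUI A B; have := IH Un In; rewrite /kneser_lt /kneser_bound CS.
lia.
Qed.

Lemma kneser_UI : (#|` sumset U K| + #|` sumset I K| <= #|` C| + #|` K|)%N.
Proof.
have Un : U != fset0 by rewrite fsetU_eq0 (negbTE An).
have ltCS : (#|` C| < #|` S|)%N.
  by rewrite fproper_ltn_card // fproperEneq C_neq_S C_sub_S.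
apply: kneser_of_bound => //; apply: IH.
- by rewrite sumset_eq0 negb_or Un stab_neq0 ?C_neq0.
- by rewrite sumset_eq0 negb_or In stab_neq0 ?C_neq0.
- by left; rewrite sumset_stab_distr ?C_neq0 // sumset_stab ?C_neq0.
Qed.

Lemma sumset_I_K : sumset I K = I.
Proof.
have IU : I `<=` U := fsubset_trans (fsubsetIl A B) (fsubsetUl A B).
set IK := sumset I K.
have sub_S X : X `<=` U -> sumset X IK `<=` S.
  move=> XU; apply: fsubset_trans C_sub_S.
  by rewrite sumsetA -[X in _ `<=` X](sumset_stab C_neq0) !sumsetS.
have IKIK : sumset IK IK `<=` S.
  by rewrite /IK sumset_stab_distr ?C_neq0 // -sumsetA; exact: sub_S.
have [/fsetUidPl IK_A /fsetUidPl IK_B] : A `|` IK = A /\ B `|` IK = B.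
  apply: saturated; rewrite ?fsubsetUl // sumsetUl !(sumsetC _ (B `|` IK)).
  rewrite !sumsetUl !fsubUset (sumsetC B A) fsubset_refl (sumsetC IK A).
  by rewrite IKIK !sub_S ?fsubsetUl ?fsubsetUr.
apply/eqP; rewrite eqEfsubset sumset_stab_sub ?C_neq0 // andbT.
by rewrite fsubsetI IK_A IK_B.
Qed.

Lemma mem_I_K y k : y \in I -> k \in K -> y + k \in I.
Proof. by move=> yI kK; rewrite -sumset_I_K mem_sumset. Qed.

Lemma mem_I_coset a y : y \in I -> y \in translate a K -> a \in I.
Proof.
rewrite translateP => yI yaK.
by have := mem_I_K yI (stabN C_neq0 yaK); rewrite opprB addrC subrK.
Qed.

Lemma card_K_gap : (#|` S `\` C| + #|` H| + #|` sumset U K `\` U| < #|` K|)%N.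
Proof.
rewrite (cardfsDS C_sub_S) (cardfsDS (sumset_stab_sub C_neq0 U)).
have := kneser_UI; rewrite sumset_I_K; have := cardfsUI A B.
have := fsubset_leq_card C_sub_S.
have := fsubset_leq_card (sumset_stab_sub C_neq0 U).
lia.
Qed.

(* a + K meets U only in A and B, outside U it lies in (U + K) \ U, and its part in A
   is moved into S \ C by adding b. *)
Lemma card_H_lt_coset a b : a \in A -> b \in B -> a + b \notin C ->
  (#|` H| < #|` B `&` translate a K|)%N.
Proof.
move=> aA bB abC; set aK := translate a K.
have aK_out : aK `\` U `<=` sumset U K `\` U.
  by rewrite fsetSD // /aK -sumset1 sumsetS ?fsub1set ?inE ?aA.
have aK_in : aK `&` U = (A `&` aK) `|` (B `&` aK).
  by rewrite fsetIUr !(fsetIC aK).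
have shift_out : translate b (A `&` aK) `<=` S `\` C.
  apply/fsubsetP=> x; rewrite translateP => /fsetIP[xA]; rewrite translateP => xaK.
  apply/fsetDP; split; first by rewrite -(subrK b x) mem_sumset.
  apply: contra abC => xC; have := stab_add (stabN C_neq0 xaK) xC.
  by rewrite !opprB -addrA subrK.
have := fsubset_leq_card aK_out; have := fsubset_leq_card shift_out.
have := cardfsID U aK; have := cardfsUI (A `&` aK) (B `&` aK).
rewrite -aK_in !card_translate; have := card_K_gap.
lia.
Qed.

Lemma disjoint_I_coset a b : a \in A -> b \in B -> a + b \notin C ->
  I `&` translate a K = fset0.
Proof.
move=> aA bB abC; apply/eqP; apply: contraNT abC => /fset0Pn[y /fsetIP[yI yaK]].
by rewrite addrC mem_sumset ?in_fsetU ?bB ?orbT // (mem_I_coset yI yaK).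
Qed.

Lemma mem_I_shift b k : k \in K -> b \in B -> b + k \in A ->
  ~~ (translate k B `<=` A) -> b + k \in I.
Proof.
move=> kK bB bkA kBA.
have I_sub : I `<=` A `&` translate k B.
  apply/fsubsetP=> y yI; rewrite in_fsetI translateP (fsubsetP (fsubsetIl A B)) //=.
  by have /fsetIP[] := mem_I_K yI (stabN C_neq0 kK).
have IE : I = A `&` translate k B.
  apply/eqP; rewrite eqEfcard I_sub max_overlap //.
  by apply: contraNneq In => ABk0; rewrite -fsubset0 -ABk0.
by rewrite IE in_fsetI bkA translateP addrK.
Qed.

Lemma in_P k : (k \in P) = (k \in K) && (translate k B `<=` A).
Proof. by rewrite in_fset. Qed.

Lemma shift_mem_A a b : I `&` translate a K = fset0 -> b \in B ->
  b \in translate a K -> forall k, k \in K -> (b + k \in A) = (k \in P).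
Proof.
move=> aK_I bB baK k kK; have bkI : b + k \notin I.
  apply/negP => bkI; suff: b + k \in I `&` translate a K by rewrite aK_I.
  by move: baK; rewrite in_fsetI bkI !translateP addrAC => baK; rewrite stabD ?C_neq0.
rewrite in_P kK /=; apply/idP/idP => [bkA|/fsubsetP kBA].
  by apply: contraNT bkI; exact: mem_I_shift.
by rewrite addrC kBA ?mem_translate.
Qed.

Section PeriodOfP.
Hypothesis Pn : P != fset0.

Lemma stab_P_sub_K : stab P `<=` K.
Proof.
apply/fsubsetP=> m mM; case/fset0Pn: Pn => p pP.
have PK q : q \in P -> q \in K by rewrite in_P => /andP[].
by rewrite -(addrK p m) stabB ?C_neq0 ?PK ?stab_add.
Qed.

Lemma add_stab_P a m : a \in A -> m \in stab P -> a + m \in A.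
Proof.
move=> aA mM; have mK := fsubsetP stab_P_sub_K m mM.
have [aK_I|/fset0Pn[y /fsetIP[yI yaK]]] := eqVneq (I `&` translate a K) fset0.
  have [BaK0|/fset0Pn[b /fsetIP[bB baK]]] := eqVneq (B `&` translate a K) fset0.
    have aBC v : v \in B -> a + v \in C.
      move=> vB; apply: contraT => avC; have := card_H_lt_coset aA vB avC.
      by rewrite BaK0 cardfs0.
    have [<- _] : a + m |` A = A /\ B = B.
      apply: saturated => //; first exact: fsubsetU1.
      apply/fsubsetP=> _ /sumsetP[u /fset1UP[->|uA] [v vB ->]]; last exact: mem_sumset.
      by rewrite addrAC addrC (fsubsetP C_sub_S) // stab_add ?aBC.
    exact: fset1U1.
  have abK : a - b \in K by rewrite -opprB stabN ?C_neq0 // -translateP.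
  have abP : a - b \in P by rewrite -(shift_mem_A aK_I bB baK abK) addrC subrK.
  have := shift_mem_A aK_I bB baK (stabD C_neq0 abK mK).
  by rewrite addrA [b + _]addrC subrK => ->; rewrite addrC stab_add.
by have /fsetIP[] := mem_I_K (mem_I_coset yI yaK) mK.
Qed.

Lemma stab_P_sub_H : stab P `<=` H.
Proof.
apply/fsubsetP=> m mM; apply/stabP; first by rewrite sumset_eq0 negb_or An.
move=> _ /sumsetP[a aA [b bB ->]].
by rewrite addrA [m + a]addrC mem_sumset ?add_stab_P.
Qed.

End PeriodOfP.

(* B n (a + K) lies in one coset of stab P, which is contained in H. *)
Lemma kneser_step_contra : False.
Proof.
have /fsubsetPn[_ /sumsetP[a aA [b bB ->]] abC] : ~~ (S `<=` C).
  by apply: contra C_neq_S => SC; rewrite eqEfsubset SC C_sub_S.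
have ltH := card_H_lt_coset aA bB abC.
have shiftE := shift_mem_A (disjoint_I_coset aA bB abC).
have /fset0Pn[b' /fsetIP[b'B b'aK]] : B `&` translate a K != fset0.
  by rewrite -cardfs_gt0 (leq_ltn_trans _ ltH).
have ab'K : a - b' \in K by rewrite -opprB stabN ?C_neq0 // -translateP.
have Pn : P != fset0.
  by apply/fset0Pn; exists (a - b'); rewrite -(shiftE b' b'B b'aK _ ab'K) addrC subrK.
have BaK_sub : B `&` translate a K `<=` translate b' (stab P).
  apply/fsubsetP=> y /fsetIP[yB yaK]; rewrite translateP; apply/stabP => // p pP.
  have pK : p \in K by move: pP; rewrite in_P => /andP[].
  have yb'K : y - b' + p \in K.
    have -> : y - b' = (y - a) - (b' - a) by rewrite opprB addrA subrK.
    move: yaK b'aK; rewrite !translateP => yaK b'aK.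
    exact: (stabD C_neq0 (stabB C_neq0 yaK b'aK) pK).
  by rewrite -(shiftE b' b'B b'aK _ yb'K) addrA [b' + _]addrC subrK shiftE.
have := fsubset_leq_card (stab_P_sub_H Pn); have := fsubset_leq_card BaK_sub.
rewrite card_translate => le1 le2.
by have := leq_ltn_trans (leq_trans le1 le2) ltH; rewrite ltnn.
Qed.

End KneserStep.

Section Kneser.
Variable G : zmodType.
Implicit Types (A B : {fset G}) (g : G).

Lemma overlap_dichotomy A B :
  (forall g, A `&` translate g B != fset0 -> translate g B `<=` A) \/
  exists g, [/\ A `&` translate g B != fset0, ~~ (translate g B `<=` A) &
    forall h, A `&` translate h B != fset0 -> ~~ (translate h B `<=` A) ->
      (#|` A `&` translate h B| <= #|` A `&` translate g B|)%N].
Proof.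
pose D := [fset g in [fset a - b | a : G in A, b : G in B] |
  (A `&` translate g B != fset0) && ~~ (translate g B `<=` A)].
have inDE g : g \in D = (g \in [fset a - b | a : G in A, b : G in B]) &&
    ((A `&` translate g B != fset0) && ~~ (translate g B `<=` A)).
  by rewrite in_fset.
have inD g : A `&` translate g B != fset0 -> ~~ (translate g B `<=` A) -> g \in D.
  move=> ABg gBA; rewrite inDE ABg gBA !andbT.
  case/fset0Pn: ABg => a /fsetIP[aA]; rewrite translateP => agB.
  by apply/imfset2P; exists a => //; exists (a - g); rewrite ?subKr.
have [D0|Dn] := eqVneq D fset0.
  left=> g ABg; apply: contraT => gBA.
  by have := inD g ABg gBA; rewrite D0 in_fset0.
right; have [g gD gmax] := fset_arg_max (fun g => #|` A `&` translate g B|) Dn.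
move: gD; rewrite inDE => /and3P[_ ABg gBA].
by exists g; split => // h ABh hBA; exact/gmax/inD.
Qed.

Lemma kneser_bound_nested A B : A != fset0 -> B != fset0 ->
  (forall g, A `&` translate g B != fset0 -> translate g B `<=` A) ->
  kneser_bound A B.
Proof.
move=> An Bn shift_sub; case/fset0Pn: (Bn) => b0 b0B.
have BH : B `<=` translate b0 (stab (sumset A B)).
  apply/fsubsetP=> b bB; rewrite translateP.
  apply/stabP; first by rewrite sumset_eq0 negb_or An.
  move=> _ /sumsetP[a aA [b' b'B ->]].
  have /fsubsetP aB_sub : translate (a - b0) B `<=` A.
    apply: shift_sub; apply/fset0Pn; exists a.
    by rewrite in_fsetI aA translateP subKr.
  have -> : b - b0 + (a + b') = a - b0 + b + b'.
    by rewrite addrA; congr (_ + _); rewrite addrAC [RHS]addrAC [b + a]addrC.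
  by rewrite mem_sumset // aB_sub // mem_translate.
have := fsubset_leq_card BH; rewrite card_translate /kneser_bound.
have := leq_card_sumsetl A Bn; lia.
Qed.

Lemma kneser_bound_step A B : A != fset0 -> B != fset0 ->
  (forall X Y, X != fset0 -> Y != fset0 -> kneser_lt X Y A B -> kneser_bound X Y) ->
  kneser_bound A B.
Proof.
wlog leBA : A B / (#|` B| <= #|` A|)%N.
  move=> wlog An Bn IH; have [leBA|ltAB] := leqP #|` B| #|` A|; first exact: wlog.
  rewrite kneser_boundC; apply: (wlog B A (ltnW ltAB) Bn An) => X Y Xn Yn.
  by move/kneser_ltC; exact: IH.
move=> An Bn IH; rewrite /kneser_bound leqNgt; apply/negP => small.
case: (overlap_dichotomy A B) => [shift_sub | [g [ABg gBA gmax]]].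
  by have := kneser_bound_nested An Bn shift_sub; rewrite /kneser_bound leqNgt small.
have gBn : translate g B != fset0 by rewrite translate_eq0.
have leBA' : (#|` translate g B| <= #|` A|)%N by rewrite card_translate.
have IH' X Y : X != fset0 -> Y != fset0 -> kneser_lt X Y A (translate g B) ->
    kneser_bound X Y.
  by move=> Xn Yn /kneser_lt_translate; exact: IH.
have small' : (#|` sumset A (translate g B)| + #|` stab (sumset A (translate g B))|
    < #|` A| + #|` translate g B|)%N.
  by rewrite sumset_translate stab_translate !card_translate.
apply: (kneser_step_contra An gBn leBA' IH' small' ABg gBA) => h.
by rewrite translateD; exact: gmax.
Qed.

Lemma kneser_bound_all A B : A != fset0 -> B != fset0 -> kneser_bound A B.
Proof. exact: (@kneser_lt_ind G (fun X Y => kneser_bound X Y) kneser_bound_step). Qed.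

Theorem kneser A B : A != fset0 -> B != fset0 ->
  (#|` sumset A (stab (sumset A B))| + #|` sumset B (stab (sumset A B))| <=
   #|` sumset A B| + #|` stab (sumset A B)|)%N.
Proof.
move=> An Bn; have ABn : sumset A B != fset0 by rewrite sumset_eq0 negb_or An.
apply: kneser_of_bound => //; apply: kneser_bound_all.
  by rewrite sumset_eq0 negb_or An stab_neq0.
by rewrite sumset_eq0 negb_or Bn stab_neq0.
Qed.

End Kneser.

Unset Implicit Arguments.
Theorem lemma2p6 (G : zmodType) (A B H : {fset G}) :
  A != fset0 -> B != fset0 ->
  is_stabilizer (sumset A B) H -> is_stabilizer B H ->
  forall x : G,
    (#|` sumset (A `|` [fset x]) B| + #|` H| >=
     #|` sumset (A `|` [fset x]) H| + #|` sumset B H|)%N.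
Proof.
move=> An Bn stabS stabB x; set A' := A `|` [fset x].
have ABn : sumset A B != fset0 by rewrite sumset_eq0 negb_or An.
have A'n : A' != fset0 by rewrite fsetU_eq0 negb_and An.
have HE : H = stab (sumset A B) := is_stabilizerE ABn stabS.
have BH : sumset B H = B by rewrite (is_stabilizerE Bn stabB) sumset_stab.
have [SE|SneS'] := eqVneq (sumset A B) (sumset A' B).
  by have := kneser A'n Bn; rewrite -SE -HE.
have S'_large : (#|` sumset A B| + #|` H| <= #|` sumset A' B|)%N.
  rewrite HE; apply: leq_card_add_stab => //; first by rewrite sumsetS ?fsubsetUl.
  by rewrite -HE -sumsetA BH.
have A'H_small : (#|` sumset A' H| <= #|` sumset A H| + #|` H|)%N.
  by rewrite /A' sumsetUl sumset1 -(card_translate x H) leq_card_fsetU.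
have := kneser An Bn; rewrite -HE; lia.
Qed.
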